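(* For every $p\ge1$ and $C>0$, the map $d_{\mathbb G,A}$ is a pseudometric on $\mathbb G$ (it is well defined on equality classes, $d_{\mathbb G,A}(G,G)=0$, it is symmetric and satisfies the triangle inequality). If $d_{\mathcal X}$ and $d_{\mathcal Y}$ are metrics, then $d_{\mathbb G,A}$ is a metric on $\mathbb G$.
   Context: Let $(\mathcal X,d_{\mathcal X})$ and $(\mathcal Y,d_{\mathcal Y})$ be pseudometric spaces (symmetric, satisfying the triangle inequality, $d(z,z)=0$), with a distinguished element $y_0\in\mathcal Y$ meaning ''no edge''. For $n\in\mathbb N_0$ write $[n]=\{1,\dots,n\}$ ($[0]=\emptyset$) and $S_n$ for the set of permutations of $[n]$. An attributed simple graph is a triple $([n],v,e)$ with $v:[n]\to\mathcal X$ and $e:[n]^2\to\mathcal Y$ symmetric ($e(i,i')=e(i',i)$) with $e(i,i)=y_0$ for all $i$; write $v_i=v(i)$, $e_{ii'}=e(i,i')$. Two graphs $([n],v,e)$, $([n],w,f)$ are regarded as equal if there is $\pi\in S_n$ with $v_i=w_{\pi(i)}$ and $e_{ii'}=f_{\pi(i)\pi(i')}$ for all $i,i'\in[n]$; $\mathbb G$ denotes the set of such graphs. GTT distance: for $p\ge1$, $C>0$ and $([m],v,e),([n],w,f)\in\mathbb G$ with $m\le n$, $$d_{\mathbb G,A}(([m],v,e),([n],w,f))=\min_{I\subset[m],\,\pi\in S_n}\Big[(m+n-2|I|)C^p+\sum_{i\in I}d_{\mathcal X}(v_i,w_{\pi(i)})^p+\tfrac12\sum_{(i,i')\in I^2}d_{\mathcal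 Y}(e_{ii'},f_{\pi(i)\pi(i')})^p+\tfrac12\sum_{(i,i')\in[m]^2\setminus I^2}d_{\mathcal Y}(e_{ii'},y_0)^p+\tfrac12\sum_{(j,j')\in[n]^2\setminus\pi(I)^2}d_{\mathcal Y}(y_0,f_{jj'})^p\Big]^{1/p},$$ and for $m>n$ it is defined by swapping the two arguments. *)

From HB Require Import structures.
From mathcomp Require Import all_boot all_order all_algebra all_fingroup.
From mathcomp Require Import reals exp.
Set Implicit Arguments. Unset Strict Implicit. Unset Printing Implicit Defensive.
Import Order.TTheory GRing.Theory Num.Theory.
Local Open Scope ring_scope.

Definition pseudometric_on (R : realType) (T : Type) (P : T -> Prop)
  (d : T -> T -> R) : Prop :=
  [/\ forall x, P x -> d x x = 0,
      forall x y, P x -> P y -> d x y = d y x &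
      forall x y z, P x -> P y -> P z -> d x z <= d x y + d y z].

Definition pseudometric (R : realType) (T : Type) (d : T -> T -> R) : Prop :=
  pseudometric_on (fun _ => True) d.

Definition metric (R : realType) (T : Type) (d : T -> T -> R) : Prop :=
  pseudometric d /\ forall x y, d x y = 0 -> x = y.

Record graph (X Y : Type) := Graph {
  gn : nat;
  gv : 'I_gn -> X;
  ge : 'I_gn -> 'I_gn -> Y }.
Arguments gv {X Y} g _.
Arguments ge {X Y} g _ _.

Definition simple_graph (X Y : Type) (y0 : Y) (G : graph X Y) : Prop :=
  (forall i i', ge G i i' = ge G i' i) /\ (forall i, ge G i i = y0).

Definition graph_eq (X Y : Type) (G H : graph X Y) : Prop :=
  exists (h : gn G = gn H) (pi : 'S_(gn H)),
    forall i i' : 'I_(gn G),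
      gv G i = gv H (pi (cast_ord h i)) /\
      ge G i i' = ge H (pi (cast_ord h i)) (pi (cast_ord h i')).

Section GTT.
Variables (R : realType) (X Y : Type) (dX : X -> X -> R) (dY : Y -> Y -> R)
  (y0 : Y) (p C : R).

(* The cost inside the minimum, for G with m vertices, H with n vertices,
   m <= n, I a subset of [m], pi in S_n (pi(i) for i in [m] via widening). *)
Definition gtt_cost (G H : graph X Y) (hmn : (gn G <= gn H)%N)
  (I : {set 'I_(gn G)}) (pi : 'S_(gn H)) : R :=
  let m := gn G in let n := gn H in
  let f := fun i : 'I_m => pi (widen_ord hmn i) in
  let pI := f @: I in
  (m + n - 2 * #|I|)%N%:R * (C `^ p)
  + \sum_(i in I) (dX (gv G i) (gv H (f i))) `^ p
  + 2^-1 * \sum_(i in I) \sum_(i' in I)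
              (dY (ge G i i') (ge H (f i) (f i'))) `^ p
  + 2^-1 * \sum_(i : 'I_m) \sum_(i' : 'I_m | ~~ ((i \in I) && (i' \in I)))
              (dY (ge G i i') y0) `^ p
  + 2^-1 * \sum_(j : 'I_n) \sum_(j' : 'I_n | ~~ ((j \in pI) && (j' \in pI)))
              (dY y0 (ge H j j')) `^ p.

(* Minimum over all (I, pi); the candidate (set0, 1) is used as the seed of
   the iterated min, so this is exactly the minimum over the finite set. *)
Definition gtt_le (G H : graph X Y) (hmn : (gn G <= gn H)%N) : R :=
  let c := gtt_cost hmn in
  (\big[Num.min/c set0 1%g]_(I : {set 'I_(gn G)})
     \big[Num.min/c set0 1%g]_(pi : 'S_(gn H)) c I pi) `^ (p^-1).

Lemma nleq_geq (m n : nat) : (m <= n)%N = false -> (n <= m)%N.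
Proof. by move=> h; apply: ltnW; rewrite ltnNge h. Qed.

(* d_{G,A}: for m <= n as above, otherwise arguments swapped. *)
Definition gtt_dist (G H : graph X Y) : R :=
  (if (gn G <= gn H)%N as b return ((gn G <= gn H)%N = b -> R)
   then fun h => gtt_le h
   else fun h => gtt_le (nleq_geq h)) erefl.

End GTT.

From HB Require Import structures.
From mathcomp Require Import all_boot all_order all_algebra all_fingroup.
From mathcomp Require Import reals exp interval_inference convex hoelder.
From mathcomp Require classical_sets.
From mathcomp Require Import ring zify lra.
Import Order.TTheory GRing.Theory Num.Theory.
Set Implicit Arguments. Unset Strict Implicit. Unset Printing Implicit Defensive.
Local Open Scope ring_scope.

(* Pad both graphs with dummy vertices up to a common size N >= m + n. A
   matching (I, pi) then becomes a permutation s of [N] (matched vertices go to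
   their partner, unmatched ones to the padding), and the GTT cost becomes a
   weighted sum over vertices and pairs of vertices of [p]-th powers of
   coordinatewise distances, a dummy being at distance C from a real vertex.
   Hence d^p is the minimum of this padded cost over all s. Symmetry follows by
   inverting s, and the triangle inequality by composing optimal permutations
   and applying Minkowski's inequality to the weighted sum; the only
   coordinatewise triangle inequality that can fail (real vertex, dummy, real
   vertex) is avoided by first relabelling the padding of the middle graph. A
   zero cost forces all vertices to be matched at distance zero. *)

(** * Powers and Minkowski's inequality *)

Section PowR.
Variable R : realType.

Lemma ler_wpowR (r x y : R) : 0 <= r -> 0 <= x -> x <= y -> x `^ r <= y `^ r.
Proof. by move=> r0 x0 xy; apply: ge0_ler_powR => //; rewrite nnegrE (le_trans x0). Qed.

Lemma powR_divr (r x y : R) : 0 <= x -> 0 <= y -> (x / y) `^ r = x `^ r / y `^ r.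
Proof.
move=> x0 y0; rewrite powRM ?invr_ge0 //.
by rewrite -(powR_inv1 y0) powRAC powR_inv1 ?powR_ge0.
Qed.

End PowR.

Section WeightedMinkowski.
Variables (R : realType) (p : R).
Hypothesis p_ge1 : 1 <= p.

Let p_gt0 : 0 < p. Proof. exact: lt_le_trans p_ge1. Qed.
Let p_ge0 : 0 <= p. Proof. exact: ltW p_gt0. Qed.
Let p_neq0 : p != 0. Proof. exact: lt0r_neq0 p_gt0. Qed.

Lemma powRVK x : 0 <= x -> (x `^ p^-1) `^ p = x.
Proof. by move=> x0; rewrite -powRrM mulVf // powRr1. Qed.

Lemma powRKV x : 0 <= x -> (x `^ p) `^ p^-1 = x.
Proof. by move=> x0; rewrite -powRrM mulfV // powRr1. Qed.

Lemma powR_convex l x y : 0 <= l <= 1 -> 0 <= x -> 0 <= y ->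
  (l * x + (1 - l) * y) `^ p <= l * x `^ p + (1 - l) * y `^ p.
Proof.
move=> /andP[l0 l1] x0 y0.
have := convex_powR p_ge1 (Itv01 l0 l1) (x := x) (y := y).
by rewrite !classical_sets.inE /= !in_itv /= x0 y0 !convRE => /(_ isT isT).
Qed.

(* Convexity of [powR ^~ p] at the convex combination
   [a + b = (A + B) * (A / (A + B) * (a / A) + B / (A + B) * (b / B))]. *)
Lemma powR_addr_le A B a b : 0 < A -> 0 < B -> 0 <= a -> 0 <= b ->
  (a + b) `^ p <=
  (A + B) `^ p * (A / (A + B) * (a `^ p / A `^ p) + B / (A + B) * (b `^ p / B `^ p)).
Proof.
move=> A_gt0 B_gt0 a0 b0; have AB_gt0 := addr_gt0 A_gt0 B_gt0.
have lB : B / (A + B) = 1 - A / (A + B) by field; rewrite gt_eqF.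
have l01 : 0 <= A / (A + B) <= 1.
  by rewrite divr_ge0 ?(ltW A_gt0) ?(ltW AB_gt0) //= ler_pdivrMr // mul1r lerDl (ltW B_gt0).
have aA0 : 0 <= a / A by rewrite divr_ge0 // (ltW A_gt0).
have bB0 : 0 <= b / B by rewrite divr_ge0 // (ltW B_gt0).
have -> : a + b = (A + B) * (A / (A + B) * (a / A) + B / (A + B) * (b / B)).
  by field; rewrite !gt_eqF.
have [l0 _] := andP l01.
have lB0 : 0 <= B / (A + B) by rewrite lB subr_ge0; case/andP: l01.
rewrite powRM ?(ltW AB_gt0) //; last by rewrite addr_ge0 // mulr_ge0.
rewrite ler_wpM2l ?powR_ge0 // -!powR_divr ?(ltW A_gt0) ?(ltW B_gt0) // lB.
exact: powR_convex l01 aA0 bB0.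
Qed.

Variables (J : finType) (w : J -> R).
Hypothesis w_gt0 : forall j, 0 < w j.

Let wsum_ge0 a : 0 <= \sum_j w j * a j `^ p.
Proof. by apply: sumr_ge0 => j _; rewrite mulr_ge0 ?powR_ge0 ?(ltW (w_gt0 j)). Qed.

Lemma wsum_powR_eq0 a : (forall j, 0 <= a j) ->
  \sum_j w j * a j `^ p = 0 -> forall j, a j = 0.
Proof.
move=> a0 S0 j; apply: (@powR_eq0_eq0 _ _ p); apply/eqP.
have /eqP := psumr_eq0P (fun i _ => mulr_ge0 (ltW (w_gt0 i)) (powR_ge0 (a i) p)) S0 (i := j) isT.
by rewrite mulf_eq0 gt_eqF.
Qed.

Lemma minkowski_wsum (a b : J -> R) :
  (forall j, 0 <= a j) -> (forall j, 0 <= b j) ->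
  (\sum_j w j * (a j + b j) `^ p) `^ p^-1 <=
  (\sum_j w j * a j `^ p) `^ p^-1 + (\sum_j w j * b j `^ p) `^ p^-1.
Proof.
move=> a0 b0.
set SA := \sum_j _ * a j `^ p; set SB := \sum_j _ * b j `^ p.
have [SA0|SA0] := eqVneq SA 0.
  rewrite SA0 powR0 ?invr_eq0 // add0r.
  apply: ler_wpowR; [by rewrite invr_ge0 | exact: wsum_ge0 |].
  by under eq_bigr => j _ do rewrite (wsum_powR_eq0 a0 SA0) add0r.
have [SB0|SB0] := eqVneq SB 0.
  rewrite SB0 powR0 ?invr_eq0 // addr0.
  apply: ler_wpowR; [by rewrite invr_ge0 | exact: wsum_ge0 |].
  by under eq_bigr => j _ do rewrite (wsum_powR_eq0 b0 SB0) addr0.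
have SAE : SA = (SA `^ p^-1) `^ p by rewrite powRVK ?wsum_ge0.
have SBE : SB = (SB `^ p^-1) `^ p by rewrite powRVK ?wsum_ge0.
have SAE' : \sum_j w j * a j `^ p = SA by [].
have SBE' : \sum_j w j * b j `^ p = SB by [].
set A := SA `^ p^-1 in SAE *; set B := SB `^ p^-1 in SBE *.
have A_gt0 : 0 < A by rewrite powR_gt0 // lt0r SA0 wsum_ge0.
have B_gt0 : 0 < B by rewrite powR_gt0 // lt0r SB0 wsum_ge0.
clearbody A B SA SB.
rewrite -(powRKV (addr_ge0 (ltW A_gt0) (ltW B_gt0))).
apply: ler_wpowR; [by rewrite invr_ge0 | exact: wsum_ge0 |].
apply: le_trans (ler_sum _ (fun j _ =>
  ler_wpM2l (ltW (w_gt0 j)) (powR_addr_le A_gt0 B_gt0 (a0 j) (b0 j)))) _.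
have -> : \sum_j w j * ((A + B) `^ p *
      (A / (A + B) * (a j `^ p / A `^ p) + B / (A + B) * (b j `^ p / B `^ p))) =
    (A + B) `^ p * (A / (A + B) * (SA / A `^ p) + B / (A + B) * (SB / B `^ p)).
  rewrite -SAE' -SBE' !mulr_suml !mulr_sumr -big_split mulr_sumr /=.
  by apply: eq_bigr => j _; ring.
rewrite SAE SBE !divff ?gt_eqF ?powR_gt0 // !mulr1 -mulrDl divff ?mulr1 //.
by rewrite gt_eqF // addr_gt0.
Qed.

End WeightedMinkowski.

(** * Extending partial injections to permutations *)

Section PermExtension.
Local Open Scope nat_scope.
Variable T : finType.

Lemma inj_in_card_le (A B : {set T}) : #|A| <= #|B| ->
  exists2 f : T -> T, {in A &, injective f} & {in A, forall x, f x \in B}.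
Proof.
move=> AB; have idx x : x \in A -> index x (enum A) < size (enum B).
  by move=> xA; rewrite -cardE (leq_trans _ AB) // cardE index_mem mem_enum.
exists (fun x => nth x (enum B) (index x (enum A))); last first.
  by move=> x xA; rewrite -mem_enum mem_nth ?idx.
move=> x y xA yA /=; rewrite (set_nth_default y x (idx x xA)) => /eqP.
rewrite nth_uniq ?enum_uniq ?idx // => /eqP eq_idx.
have [xA' yA'] : x \in enum A /\ y \in enum A by rewrite !mem_enum.
by rewrite -(nth_index x xA') eq_idx nth_index.
Qed.

Lemma perm_extend_in (A : {set T}) (f : T -> T) :
  {in A &, injective f} -> exists s : {perm T}, {in A, s =1 f}.
Proof.
move=> f_inj; have card_compl : #|~: A| <= #|~: (f @: A)|.
  by rewrite -(leq_add2l #|A|) cardsC -{1}(card_in_imset f_inj) cardsC.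
have [g g_inj gAc] := inj_in_card_le card_compl.
pose h x := if x \in A then f x else g x.
have h_inj : injective h.
  move=> x y; rewrite /h; case: (boolP (x \in A)) => xA; case: (boolP (y \in A)) => yA.
  - exact: f_inj.
  - move=> fgx; have := gAc y; rewrite !inE yA => /(_ isT).
    by rewrite -fgx imset_f.
  - move=> fgx; have := gAc x; rewrite !inE xA => /(_ isT).
    by rewrite fgx imset_f.
  - by apply: g_inj; rewrite inE.
by exists (perm h_inj) => x xA; rewrite permE /h xA.
Qed.

Lemma perm_fix_map_in (A S U : {set T}) :
  [disjoint A & S] -> [disjoint A & U] -> #|S| <= #|U| ->
  exists tau : {perm T},
    {in A, forall x, tau x = x} /\ {in S, forall x, tau x \in U}.
Proof.
move=> AS AU SU; have [g g_inj gSU] := inj_in_card_le SU.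
pose f x := if x \in A then x else g x.
have gA x : x \in S -> g x \notin A.
  by move=> xS; rewrite (disjointFl AU) ?gSU.
have f_inj : {in A :|: S &, injective f}.
  move=> x y; rewrite /f !inE; case: ifP => xA; case: ifP => yA //=.
  - by move=> _ yS eq_xgy; move: (gA _ yS); rewrite -eq_xgy xA.
  - by move=> xS _ eq_gxy; move: (gA _ xS); rewrite eq_gxy yA.
  - exact: g_inj.
have [tau tau_f] := perm_extend_in f_inj.
exists tau; split=> x xA_S.
  by rewrite tau_f /f ?xA_S // inE xA_S.
have xA : x \notin A by rewrite (disjointFl AS).
by rewrite tau_f /f ?(negbTE xA) ?gSU // inE xA_S orbT.
Qed.

End PermExtension.

Section OrdinalRelabelling.
Local Open Scope nat_scope.

Lemma card_ord_ltn N b : b <= N -> #|[set y : 'I_N | y < b]| = b.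
Proof.
move=> bN; rewrite -sum1_card (eq_bigl (fun y : 'I_N => y < b)) => [|y].
  by rewrite (big_ord_narrow bN) sum1_card card_ord.
by rewrite inE.
Qed.

Lemma card_ord_geq N b : #|[set y : 'I_N | b <= y]| = N - b.
Proof.
have <- : ~: [set y : 'I_N | y < b] = [set y : 'I_N | b <= y].
  by apply/setP => y; rewrite !inE -leqNgt.
have := cardsC [set y : 'I_N | y < b]; rewrite card_ord.
case: (leqP b N) => [bN|Nb]; first by rewrite card_ord_ltn //; lia.
have -> : [set y : 'I_N | y < b] = setT.
  by apply/setP => y; rewrite !inE (ltn_trans (ltn_ord y) Nb).
by rewrite setCT cards0 cardsT card_ord; lia.
Qed.

Lemma card_perm_preim_ltn N c (s : 'S_N) : c <= N ->
  #|s @^-1: [set z : 'I_N | z < c]| = c.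
Proof. by move=> cN; rewrite card_preimset ?card_ord_ltn //; apply: perm_inj. Qed.

Lemma perm_fix_prefix_relabel N a b c (s1 s2 : 'S_N) : a + b + c <= N ->
  exists tau : 'S_N, (forall y : 'I_N, y < b -> tau y = y) /\
    (forall k : 'I_N, k < a -> b <= s1 k -> c <= s2 (tau (s1 k))).
Proof.
move=> abcN.
pose A := [set y : 'I_N | y < b].
pose S := [set y : 'I_N | (b <= y) && ((s1^-1)%g y < a)].
pose U := [set y : 'I_N | (b <= y) && (c <= s2 y)].
have AS : [disjoint A & S] by apply/pred0P => y /=; rewrite !inE; case: ltnP.
have AU : [disjoint A & U] by apply/pred0P => y /=; rewrite !inE; case: ltnP.
have S_le_a : #|S| <= a.
  rewrite -(card_perm_preim_ltn (s1^-1)%g (_ : a <= N)); last by lia.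
  by apply: subset_leq_card; apply/subsetP => y; rewrite !inE => /andP[].
have a_le_U : a <= #|U|.
  have -> : U = [set y : 'I_N | b <= y] :\: s2 @^-1: [set z : 'I_N | z < c].
    by apply/setP => y; rewrite !inE -leqNgt andbC.
  have := subset_leq_card
    (subsetIr [set y : 'I_N | b <= y] (s2 @^-1: [set z : 'I_N | z < c])).
  by rewrite cardsD card_ord_geq card_perm_preim_ltn; lia.
have [tau [tauA tauS]] := perm_fix_map_in AS AU (leq_trans S_le_a a_le_U).
exists tau; split=> [y yb | k ka bs1k]; first by rewrite tauA ?inE.
by have := tauS (s1 k); rewrite !inE permK bs1k ka => /(_ isT) /andP[].
Qed.

End OrdinalRelabelling.

Section PseudometricTheory.
Variables (R : realType) (T : Type) (d : T -> T -> R).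
Hypothesis d_pm : pseudometric d.

Lemma pseudometricxx x : d x x = 0.
Proof. by case: d_pm => + _ _; apply. Qed.

Lemma pseudometricC x y : d x y = d y x.
Proof. by case: d_pm => _ + _; apply. Qed.

Lemma pseudometric_triangle x y z : d x z <= d x y + d y z.
Proof. by case: d_pm => _ _; apply. Qed.

Lemma pseudometric_ge0 x y : 0 <= d x y.
Proof.
have := pseudometric_triangle x y x.
by rewrite pseudometricxx (pseudometricC y x) -mulr2n -mulr_natr pmulr_lge0.
Qed.

End PseudometricTheory.

Section BigSums.
Variable V : nmodType.

Lemma big_ord_split N m (h : (m <= N)%N) (F : 'I_N -> V) :
  \sum_(k < N) F k = \sum_(i < m) F (widen_ord h i) + \sum_(k < N | (m <= k)%N) F k.
Proof.
rewrite (bigID (fun k : 'I_N => (k < m)%N)) /= big_ord_narrow.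
by under [X in _ + X]eq_bigl do rewrite -leqNgt.
Qed.

Lemma big2_if (T : finType) (P : pred T) (A B : T -> T -> V) :
  \sum_i \sum_i' (if P i && P i' then A i i' else B i i') =
  \sum_(i | P i) \sum_(i' | P i') A i i' + \sum_i \sum_(i' | ~~ (P i && P i')) B i i'.
Proof.
rewrite [\sum_(i | P i) _]big_mkcond -big_split; apply: eq_bigr => i _ /=.
rewrite (bigID (fun i' => P i && P i')) /=; congr (_ + _).
  by case: (P i) => /=; [apply: eq_bigr => i' -> | rewrite big_pred0].
by apply: eq_bigr => i' /negbTE ->.
Qed.

Lemma big2_ord_narrow N m (h : (m <= N)%N) (F : 'I_N -> 'I_N -> V) :
  (forall k k' : 'I_N, ~~ ((k < m) && (k' < m))%N -> F k k' = 0) ->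
  \sum_(k < N) \sum_(k' < N) F k k' =
  \sum_(i < m) \sum_(i' < m) F (widen_ord h i) (widen_ord h i').
Proof.
move=> F0; have -> : \sum_(k < N) \sum_(k' < N) F k k' =
    \sum_(k < N) \sum_(k' < N) (if ((k < m) && (k' < m))%N then F k k' else 0).
  by apply: eq_bigr => k _; apply: eq_bigr => k' _; case: ifP => // /negbT /F0.
rewrite (big2_if (fun k : 'I_N => (k < m)%N) F (fun _ _ => 0)) /=.
rewrite [X in _ + X]big1 => [|k _]; last exact: big1.
rewrite addr0 big_ord_narrow; apply: eq_bigr => i _; exact: big_ord_narrow.
Qed.

End BigSums.

(** * Padded graphs and the GTT distance *)

Section GttDistance.
Variables (R : realType) (X Y : Type) (dX : X -> X -> R) (dY : Y -> Y -> R).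
Variables (y0 : Y) (p C : R).
Hypotheses (p_ge1 : 1 <= p) (C_gt0 : 0 < C).
Hypotheses (dX_pm : pseudometric dX) (dY_pm : pseudometric dY).

Let p_ge0 : 0 <= p. Proof. exact: le_trans ler01 p_ge1. Qed.
Let p_neq0 : p != 0. Proof. by rewrite gt_eqF // (lt_le_trans ltr01). Qed.

(* A graph is viewed as padded with dummy vertices at every index [k >= gn G];
   edges at a dummy vertex are [y0]. *)
Definition pad_vertex (G : graph X Y) (k : nat) : option X :=
  omap (gv G) (insub k : option 'I_(gn G)).

Definition pad_edge (G : graph X Y) (k k' : nat) : Y :=
  match (insub k : option 'I_(gn G)), (insub k' : option 'I_(gn G)) with
  | Some i, Some i' => ge G i i'
  | _, _ => y0
  end.

Lemma pad_vertex_ord G (i : 'I_(gn G)) : pad_vertex G i = Some (gv G i).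
Proof. by rewrite /pad_vertex valK. Qed.

Lemma pad_vertex_dummy G k : (gn G <= k)%N -> pad_vertex G k = None.
Proof. by move=> Gk; rewrite /pad_vertex insubN // -leqNgt. Qed.

Lemma isSome_pad_vertex G k : isSome (pad_vertex G k) = (k < gn G)%N.
Proof. by case: ltnP => [kG|/pad_vertex_dummy ->]; rewrite // /pad_vertex insubT. Qed.

Lemma pad_edge_ord G (i i' : 'I_(gn G)) : pad_edge G i i' = ge G i i'.
Proof. by rewrite /pad_edge !valK. Qed.

Lemma pad_edge_dummy G k k' :
  ~~ ((k < gn G)%N && (k' < gn G)%N) -> pad_edge G k k' = y0.
Proof.
rewrite negb_and -!leqNgt /pad_edge => /orP[Gk|Gk'].
  by rewrite insubN // -leqNgt.
by case: insubP => // *; rewrite insubN // -leqNgt.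
Qed.

(* A dummy is at distance [C] from a real vertex: this is how unmatched
   vertices are charged [C ^ p]. *)
Definition vdist (a b : option X) : R :=
  match a, b with
  | Some x, Some z => dX x z
  | None, None => 0
  | _, _ => C
  end.

Lemma vdist_ge0 a b : 0 <= vdist a b.
Proof.
by case: a b => [x|] [z|] //=; rewrite ?(pseudometric_ge0 dX_pm) // ltW.
Qed.

Lemma vdistC a b : vdist a b = vdist b a.
Proof. by case: a b => [x|] [z|] //=; rewrite (pseudometricC dX_pm). Qed.

(* Fails only for real, dummy, real, as [dX] may exceed [2 C]. *)
Lemma vdist_triangle a b c : ~ [/\ isSome a, b = None & isSome c] ->
  vdist a c <= vdist a b + vdist b c.
Proof.
case: a b c => [x|] [y|] [z|] //= abc; rewrite ?add0r ?addr0 //.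
- exact: (pseudometric_triangle dX_pm).
- by rewrite lerDr (pseudometric_ge0 dX_pm).
- by case: abc.
- by rewrite lerDl (pseudometric_ge0 dX_pm).
- by rewrite addr_ge0 // ltW.
Qed.

Section Cost.
Variable N : nat.
Implicit Types (G H : graph X Y) (f g h : 'I_N -> 'I_N).

Definition pcost G H f g : R :=
  \sum_(k < N) vdist (pad_vertex G (f k)) (pad_vertex H (g k)) `^ p
  + 2^-1 * \sum_(k < N) \sum_(k' < N)
      dY (pad_edge G (f k) (f k')) (pad_edge H (g k) (g k')) `^ p.

Lemma pcost_ge0 G H f g : 0 <= pcost G H f g.
Proof.
rewrite addr_ge0 ?mulr_ge0 ?invr_ge0 //; do ?[apply: sumr_ge0 => ? _];
  exact: powR_ge0.
Qed.

Lemma eq_pcost G H f1 f2 g1 g2 : f1 =1 f2 -> g1 =1 g2 ->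
  pcost G H f1 g1 = pcost G H f2 g2.
Proof.
move=> f12 g12; rewrite /pcost; congr (_ + _ * _); apply: eq_bigr => k _.
  by rewrite f12 g12.
by apply: eq_bigr => k' _; rewrite !f12 !g12.
Qed.

Lemma pcostC G H f g : pcost G H f g = pcost H G g f.
Proof.
rewrite /pcost; congr (_ + _ * _); apply: eq_bigr => k _; first by rewrite vdistC.
by apply: eq_bigr => k' _; rewrite (pseudometricC dY_pm).
Qed.

Lemma pcost_comp_perm G H f g (u : 'S_N) :
  pcost G H (f \o u) (g \o u) = pcost G H f g.
Proof.
have u_inj := @perm_inj _ u.
rewrite /pcost; congr (_ + 2^-1 * _); first by rewrite [RHS](reindex_inj u_inj).
rewrite [RHS](reindex_inj u_inj); apply: eq_bigr => k _.
by rewrite [RHS](reindex_inj u_inj).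
Qed.

Lemma pcost_fix_padding G H f g (u : 'S_N) :
  (forall y : 'I_N, (y < gn G)%N -> u y = y) -> pcost G H (u \o f) g = pcost G H f g.
Proof.
move=> u_fix; have u_ltn k : (u k < gn G)%N = (k < gn G)%N.
  case: (ltnP k (gn G)) => [kG|Gk]; first by rewrite u_fix.
  apply/negbTE/negP => uk_lt; have /perm_inj ukk := u_fix _ uk_lt.
  by move: Gk; rewrite -ukk leqNgt uk_lt.
have pv k : pad_vertex G (u k) = pad_vertex G k.
  case: (ltnP k (gn G)) => [kG|Gk]; first by rewrite u_fix.
  by rewrite !pad_vertex_dummy // leqNgt u_ltn -leqNgt.
have pe k k' : pad_edge G (u k) (u k') = pad_edge G k k'.
  case kk: ((k < gn G) && (k' < gn G))%N; last by rewrite !pad_edge_dummy ?u_ltn ?kk.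
  by case/andP: kk => kG k'G; rewrite !u_fix.
rewrite /pcost; congr (_ + _ * _); apply: eq_bigr => k _; first by rewrite /= pv.
by apply: eq_bigr => k' _; rewrite /= pe.
Qed.

(* Vertices are indexed by [inl k], ordered pairs of vertices by [inr (k, k')]. *)
Definition cost_weight (j : 'I_N + 'I_N * 'I_N) : R :=
  if j is inl _ then 1 else 2^-1.

Definition cost_term G H f g (j : 'I_N + 'I_N * 'I_N) : R :=
  match j with
  | inl k => vdist (pad_vertex G (f k)) (pad_vertex H (g k))
  | inr kk => dY (pad_edge G (f kk.1) (f kk.2)) (pad_edge H (g kk.1) (g kk.2))
  end.

Lemma pcostE G H f g :
  pcost G H f g = \sum_j cost_weight j * cost_term G H f g j `^ p.
Proof.
rewrite /pcost big_sumType /= pair_big mulr_sumr.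
by congr (_ + _); apply: eq_bigr => k _; rewrite mul1r.
Qed.

Lemma pcost_triangle G1 G2 G3 f g h :
  (forall k, ~ [/\ isSome (pad_vertex G1 (f k)), pad_vertex G2 (g k) = None
                 & isSome (pad_vertex G3 (h k))]) ->
  pcost G1 G3 f h `^ p^-1 <= pcost G1 G2 f g `^ p^-1 + pcost G2 G3 g h `^ p^-1.
Proof.
move=> no_detour; rewrite !pcostE.
have w_gt0 j : 0 < cost_weight j by case: j => //= _; rewrite invr_gt0.
have term_ge0 G H f' g' j : 0 <= cost_term G H f' g' j.
  by case: j => [k|kk] /=; rewrite ?vdist_ge0 ?(pseudometric_ge0 dY_pm).
apply: le_trans _ (minkowski_wsum p_ge1 w_gt0 (term_ge0 _ _ f g) (term_ge0 _ _ g h)).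
apply: ler_wpowR; first by rewrite invr_ge0.
  by apply: sumr_ge0 => j _; rewrite mulr_ge0 ?powR_ge0 ?(ltW (w_gt0 j)).
apply: ler_sum => j _; rewrite ler_wpM2l ?(ltW (w_gt0 j)) //.
apply: ler_wpowR; [exact: p_ge0 | exact: term_ge0 |].
case: j => [k|kk] /=; last exact: (pseudometric_triangle dY_pm).
exact/vdist_triangle/no_detour.
Qed.

End Cost.

Section Matching.
(* [s] realises the matching [(I, pi)] of the GTT cost on padded graphs. *)
Variables (G H : graph X Y) (N : nat).
Hypotheses (mn : (gn G <= gn H)%N) (mN : (gn G <= N)%N) (nN : (gn H <= N)%N).
Variables (I : {set 'I_(gn G)}) (pi : 'S_(gn H)) (s : 'S_N).
Hypothesis s_matched : forall i, i \in I ->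
  val (s (widen_ord mN i)) = val (pi (widen_ord mn i)).
Hypothesis s_unmatched : forall i, i \notin I -> (gn H <= s (widen_ord mN i))%N.

Local Notation match_image := ((fun i : 'I_(gn G) => pi (widen_ord mn i)) @: I).

Lemma matched_preimage j :
  ((s^-1)%g (widen_ord nN j) < gn G)%N = (j \in match_image).
Proof.
apply/idP/imsetP => [jG|[i iI ->]].
  pose i := Ordinal jG.
  have wi : widen_ord mN i = (s^-1)%g (widen_ord nN j) by exact: val_inj.
  have [iI|iI] := boolP (i \in I).
    by exists i => //; apply: val_inj; rewrite -s_matched // wi permKV.
  by have := s_unmatched iI; rewrite wi permKV /= leqNgt ltn_ord.
have -> : widen_ord nN (pi (widen_ord mn i)) = s (widen_ord mN i).
  by apply: val_inj; rewrite /= s_matched.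
by rewrite permK /= ltn_ord.
Qed.

Lemma pcost_vertices :
  \sum_(k < N) vdist (pad_vertex G k) (pad_vertex H (s k)) `^ p =
  (gn G + gn H - 2 * #|I|)%N%:R * C `^ p
  + \sum_(i in I) dX (gv G i) (gv H (pi (widen_ord mn i))) `^ p.
Proof.
have I_le_m : (#|I| <= gn G)%N by rewrite -[leqRHS]card_ord max_card.
pose real_H (k : 'I_N) := if (s k < gn H)%N then C `^ p else 0.
have sum_real_H : \sum_(k < N) real_H k = C `^ p *+ gn H.
  rewrite (reindex_inj (@perm_inj _ (s^-1)%g)) /= /real_H.
  under eq_bigr do rewrite permKV.
  by rewrite -big_mkcond (big_ord_narrow nN) sumr_const card_ord.
have real_H_G : \sum_(i < gn G) real_H (widen_ord mN i) = C `^ p *+ #|I|.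
  rewrite -sumr_const [RHS]big_mkcond /=; apply: eq_bigr => i _; rewrite /real_H.
  have [iI|/s_unmatched] := boolP (i \in I); first by rewrite s_matched ?ltn_ord.
  by rewrite ltnNge => ->.
have on_G i :
    vdist (pad_vertex G (widen_ord mN i)) (pad_vertex H (s (widen_ord mN i))) `^ p =
    if i \in I then dX (gv G i) (gv H (pi (widen_ord mn i))) `^ p else C `^ p.
  have -> : pad_vertex G (widen_ord mN i) = Some (gv G i) by exact: pad_vertex_ord.
  have [iI|/s_unmatched sH] := ifPn.
    by rewrite s_matched // pad_vertex_ord.
  by rewrite pad_vertex_dummy.
have off_G (k : 'I_N) : (gn G <= k)%N ->
    vdist (pad_vertex G k) (pad_vertex H (s k)) `^ p = real_H k.
  move=> Gk; rewrite pad_vertex_dummy // /real_H.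
  have := isSome_pad_vertex H (s k); case: (pad_vertex H _) => [x|] /= <- //.
  exact: powR0.
have off_G_sum :
    \sum_(k < N | (gn G <= k)%N) real_H k = C `^ p *+ gn H - C `^ p *+ #|I|.
  by apply/eqP; rewrite eq_sym subr_eq addrC -sum_real_H -real_H_G -big_ord_split.
rewrite (big_ord_split mN) (eq_bigr _ (fun i _ => on_G i)) (eq_bigr _ off_G) off_G_sum.
rewrite (bigID (mem I)) /=; under eq_bigr => i iI do rewrite iI.
under [X in _ + X + _]eq_bigr => i /negbTE iI do rewrite iI.
have -> : (gn G + gn H - 2 * #|I|)%N = (gn G - #|I| + (gn H - #|I|))%N.
  by have := leq_trans I_le_m mn; lia.
have card_unmatched : #|(fun i : 'I_(gn G) => i \notin I)| = (gn G - #|I|)%N.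
  have unmatchedE : (fun i : 'I_(gn G) => i \notin I) =i ~: I.
    by move=> i; rewrite inE unfold_in.
  by rewrite (eq_card unmatchedE) [LHS]cardsCs setCK card_ord.
rewrite sumr_const card_unmatched natrD mulrDl !mulr_natl.
by rewrite (mulrnBr _ (leq_trans I_le_m mn)) [RHS]addrC [RHS]addrA.
Qed.

Lemma pcost_edges :
  \sum_(k < N) \sum_(k' < N) dY (pad_edge G k k') (pad_edge H (s k) (s k')) `^ p =
  \sum_(i in I) \sum_(i' in I)
    dY (ge G i i') (ge H (pi (widen_ord mn i)) (pi (widen_ord mn i'))) `^ p
  + \sum_(i : 'I_(gn G)) \sum_(i' : 'I_(gn G) | ~~ ((i \in I) && (i' \in I)))
    dY (ge G i i') y0 `^ p
  + \sum_(j : 'I_(gn H))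
      \sum_(j' : 'I_(gn H) | ~~ ((j \in match_image) && (j' \in match_image)))
    dY y0 (ge H j j') `^ p.
Proof.
set E := fun k k' : 'I_N => dY (pad_edge G k k') (pad_edge H (s k) (s k')) `^ p.
have -> : \sum_(k < N) \sum_(k' < N) E k k' =
    \sum_(k < N) \sum_(k' < N)
      (if ((k < gn G) && (k' < gn G))%N then E k k' else E k k').
  by apply: eq_bigr => k _; apply: eq_bigr => k' _; case: ifP.
rewrite big2_if (big_ord_narrow mN); under eq_bigr do rewrite (big_ord_narrow mN).
have on_G i i' : E (widen_ord mN i) (widen_ord mN i') =
    if (i \in I) && (i' \in I)
    then dY (ge G i i') (ge H (pi (widen_ord mn i)) (pi (widen_ord mn i'))) `^ p
    else dY (ge G i i') y0 `^ p.
  rewrite /E (pad_edge_ord i i'); case: ifPn => [/andP[iI i'I]|].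
    by rewrite !s_matched // pad_edge_ord.
  rewrite negb_and => not_both; rewrite pad_edge_dummy // negb_and -!leqNgt.
  by case/orP: not_both => /s_unmatched ->; rewrite ?orbT.
rewrite (eq_bigr _ (fun i _ => eq_bigr _ (fun i' _ => on_G i i'))) big2_if.
congr (_ + _).
have off_G (k k' : 'I_N) : ~~ ((k < gn G) && (k' < gn G))%N ->
    E k k' = dY y0 (pad_edge H (s k) (s k')) `^ p.
  by move=> not_both; rewrite /E pad_edge_dummy.
rewrite (eq_bigr _ (fun k _ => eq_bigr _ (off_G k))).
have -> : \sum_(k < N) \sum_(k' < N | ~~ ((k < gn G) && (k' < gn G))%N)
      dY y0 (pad_edge H (s k) (s k')) `^ p =
    \sum_(j < N) \sum_(j' < N)
      (if (((s^-1)%g j < gn G) && ((s^-1)%g j' < gn G))%N then 0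
       else dY y0 (pad_edge H j j') `^ p).
  rewrite [RHS](reindex_inj (@perm_inj _ s)); apply: eq_bigr => k _.
  rewrite big_mkcond [RHS](reindex_inj (@perm_inj _ s)); apply: eq_bigr => k' _.
  by rewrite !permK if_neg.
rewrite (big2_ord_narrow nN) => [|j j' not_both]; last first.
  by rewrite pad_edge_dummy // (pseudometricxx dY_pm) powR0 // if_same.
apply: eq_bigr => j _; rewrite [RHS]big_mkcond; apply: eq_bigr => j' _.
by rewrite /= !matched_preimage pad_edge_ord if_neg.
Qed.

Lemma pcost_matching : pcost G H id s = gtt_cost dX dY y0 p C mn I pi.
Proof. by rewrite /pcost pcost_vertices pcost_edges /gtt_cost !mulrDr !addrA. Qed.

End Matching.

Local Notation cost := (gtt_cost dX dY y0 p C).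
Local Notation d := (gtt_dist dX dY y0 p C).

Definition gtt_min G H (mn : (gn G <= gn H)%N) : R :=
  \big[Num.min/cost mn set0 1%g]_(I : {set 'I_(gn G)})
    \big[Num.min/cost mn set0 1%g]_(pi : 'S_(gn H)) cost mn I pi.

Section MinimalCost.
Variables (G H : graph X Y) (mn : (gn G <= gn H)%N).

Lemma gtt_min_le I pi : gtt_min mn <= cost mn I pi.
Proof. exact: le_trans (bigmin_le _ I _) (bigmin_le _ pi _). Qed.

Lemma gtt_min_attained : exists I pi, gtt_min mn = cost mn I pi.
Proof.
pose attained v := exists I pi, v = cost mn I pi.
have min_attained a b : attained a -> attained b -> attained (Num.min a b).
  by move=> aA bA; case: (leP a b).
apply: (big_ind attained) => // [|I _]; first by exists set0, 1%g.
by apply: (big_ind attained) => // [|pi _]; [exists set0, 1%g | exists I, pi].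
Qed.

Variables (N : nat) (mnN : (gn G + gn H <= N)%N).
Let mN : (gn G <= N)%N := leq_trans (leq_addr _ _) mnN.
Let nN : (gn H <= N)%N := leq_trans (leq_addl _ _) mnN.

(* Match [i] with [s i] whenever [s i] is a real vertex of [H]. *)
Lemma gtt_min_le_pcost (s : 'S_N) : gtt_min mn <= pcost G H id s.
Proof.
pose I := [set i : 'I_(gn G) | (s (widen_ord mN i) < gn H)%N].
pose A := [set j : 'I_(gn H) | (j < gn G)%N && (s (widen_ord nN j) < gn H)%N].
pose f j := insubd j (val (s (widen_ord nN j))) : 'I_(gn H).
have f_val j : j \in A -> val (f j) = s (widen_ord nN j).
  by rewrite inE => /andP[_ sj]; rewrite val_insubd sj.
have f_inj : {in A &, injective f}.
  move=> j j' jA j'A /(congr1 val); rewrite !f_val // => /val_inj/perm_inj.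
  by move/(congr1 val) => eq_jj'; apply: val_inj.
have [pi pi_f] := perm_extend_in f_inj.
have widen_mn i : widen_ord nN (widen_ord mn i) = widen_ord mN i by exact: val_inj.
rewrite (@pcost_matching _ _ _ mn mN nN I pi s) ?gtt_min_le // => i.
  rewrite inE => si.
  have iA : widen_ord mn i \in A by rewrite inE /= ltn_ord widen_mn.
  by rewrite pi_f // f_val // widen_mn.
by rewrite inE -leqNgt.
Qed.

(* Send [i] to its partner [pi i] if matched, and to the padding index
   [gn H + i] otherwise. *)
Lemma exists_pcost_eq_gtt_min : exists s : 'S_N, pcost G H id s = gtt_min mn.
Proof.
have [I [pi ->]] := gtt_min_attained.
pose F (k : nat) := if insub k is Some i then
  (if i \in I then val (pi (widen_ord mn i)) else gn H + k)%N else k.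
pose A := [set k : 'I_N | (k < gn G)%N].
have F_lt k : k \in A -> (F k < N)%N.
  rewrite inE => kG; rewrite /F insubT /=; case: ifP => _.
    exact: leq_trans (ltn_ord _) nN.
  by apply: leq_trans mnN; rewrite addnC ltn_add2r.
pose f (k : 'I_N) := insubd k (F k) : 'I_N.
have f_val k : k \in A -> val (f k) = F k by move=> kA; rewrite val_insubd F_lt.
have f_inj : {in A &, injective f}.
  move=> k k' kA k'A /(congr1 val); rewrite !f_val //.
  move: kA k'A; rewrite !inE /F => kG k'G.
  case: insubP => [i _ ki|]; last by rewrite kG.
  case: insubP => [i' _ ki'|]; last by rewrite k'G.
  have [iI|iI] := boolP (i \in I); have [i'I|i'I] := boolP (i' \in I).
  - move/val_inj/perm_inj/(congr1 val) => /= eq_ii'.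
    by apply: val_inj; rewrite /= -ki -ki'.
  - move=> eq_pi; have := ltn_ord (pi (widen_ord mn i)).
    by rewrite eq_pi ltnNge leq_addr.
  - move=> eq_pi; have := ltn_ord (pi (widen_ord mn i')).
    by rewrite -eq_pi ltnNge leq_addr.
  - by move/addnI => /val_inj.
have [s s_f] := perm_extend_in f_inj.
have GA i : widen_ord mN i \in A by rewrite inE /= ltn_ord.
exists s; apply: (@pcost_matching _ _ _ mn mN nN I pi s) => i iI.
  by rewrite s_f // f_val // /F /= valK iI.
by rewrite s_f // f_val // /F /= valK (negbTE iI) leq_addr.
Qed.

End MinimalCost.

Lemma gtt_min_ge0 G H (mn : (gn G <= gn H)%N) : 0 <= gtt_min mn.
Proof. by have [s <-] := exists_pcost_eq_gtt_min mn (leqnn _); apply: pcost_ge0. Qed.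

Lemma gtt_cost_setT_eq0 G H (mn : (gn G <= gn H)%N) (e : gn G = gn H)
    (pi : 'S_(gn H)) :
  (forall i i' : 'I_(gn G), gv G i = gv H (pi (cast_ord e i)) /\
     ge G i i' = ge H (pi (cast_ord e i)) (pi (cast_ord e i'))) ->
  cost mn setT pi = 0.
Proof.
move=> Gpi; have wc i : widen_ord mn i = cast_ord e i by exact: val_inj.
have pi_onto j : j \in (fun i : 'I_(gn G) => pi (widen_ord mn i)) @: setT.
  apply/imsetP; exists (cast_ord (esym e) ((pi^-1)%g j)) => //.
  by rewrite wc cast_ordKV permKV.
rewrite /gtt_cost cardsT card_ord (_ : (_ + _ - _)%N = 0%N) ?mul0r ?add0r; last by lia.
rewrite big1 => [|i _]; last by rewrite wc (proj1 (Gpi i i)) (pseudometricxx dX_pm) powR0.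
rewrite big1 => [|i _]; last first.
  by rewrite big1 // => i' _; rewrite !wc (proj2 (Gpi i i')) (pseudometricxx dY_pm) powR0.
rewrite big1 => [|i _]; last by rewrite big_pred0 // => i'; rewrite !in_setT.
rewrite big1 => [|j _]; last by rewrite big_pred0 // => j'; rewrite !pi_onto.
by rewrite !mulr0 !addr0.
Qed.

Lemma gtt_cost_eq0 G H (mn : (gn G <= gn H)%N) I pi : cost mn I pi = 0 ->
  [/\ (gn G + gn H = 2 * #|I|)%N,
      {in I, forall i, dX (gv G i) (gv H (pi (widen_ord mn i))) = 0} &
      {in I &, forall i i',
        dY (ge G i i') (ge H (pi (widen_ord mn i)) (pi (widen_ord mn i'))) = 0}].
Proof.
have I_le_m : (#|I| <= gn G)%N by rewrite -[leqRHS]card_ord max_card.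
rewrite /gtt_cost.
set t1 := _%:R * _; set t2 := \sum_(i in I) _; set t3 := \sum_(i in I) _.
set t4 := \sum_(i < gn G) _; set t5 := \sum_(j < gn H) _.
have pow_ge0 (x : R) : 0 <= x `^ p := powR_ge0 x p.
have t1_ge0 : 0 <= t1 by rewrite mulr_ge0 ?powR_ge0.
have t2_ge0 : 0 <= t2 by apply: sumr_ge0.
have t3_ge0 : 0 <= t3 by do 2![apply: sumr_ge0 => ? _].
have t4_ge0 : 0 <= t4 by do 2![apply: sumr_ge0 => ? _].
have t5_ge0 : 0 <= t5 by do 2![apply: sumr_ge0 => ? _].
move=> cost0; have t1_0 : t1 = 0 by lra.
have t2_0 : t2 = 0 by lra.
have t3_0 : t3 = 0 by lra.
split.
- move/eqP: t1_0; rewrite mulf_eq0 (gt_eqF (powR_gt0 p C_gt0)) orbF pnatr_eq0 subn_eq0.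
  by have := leq_trans I_le_m mn; lia.
- by move=> i iI; apply/(@powR_eq0_eq0 _ _ p)/(psumr_eq0P _ t2_0).
- move=> i i' iI i'I; apply/(@powR_eq0_eq0 _ _ p).
  by apply: (psumr_eq0P _ (psumr_eq0P _ t3_0 iI)) => // ? _; apply: sumr_ge0.
Qed.

Variant gtt_dist_spec G H : R -> Type :=
| GttDistLe (mn : (gn G <= gn H)%N) : gtt_dist_spec G H (gtt_min mn `^ p^-1)
| GttDistGt (nm : (gn H < gn G)%N) : gtt_dist_spec G H (gtt_min (ltnW nm) `^ p^-1).

Lemma gtt_distP G H : gtt_dist_spec G H (d G H).
Proof.
rewrite /gtt_dist; move: (erefl (gn G <= gn H)%N).
case: {2 3}(gn G <= gn H)%N => mn.
  exact: GttDistLe.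
have nm : (gn H < gn G)%N by rewrite ltnNge mn.
by rewrite (bool_irrelevance (nleq_geq mn) (ltnW nm)); apply: GttDistGt.
Qed.

Lemma gtt_dist_ge0 G H : 0 <= d G H.
Proof. by case: gtt_distP => *; apply: powR_ge0. Qed.

Lemma pcostV G H N (s : 'S_N) : pcost G H id s = pcost H G id (s^-1)%g.
Proof.
rewrite pcostC -(pcost_comp_perm _ _ _ _ (s^-1)%g).
by apply: eq_pcost => k /=; rewrite ?permKV.
Qed.

Lemma gtt_dist_powR_le_pcost G H N (s : 'S_N) : (gn G + gn H <= N)%N ->
  d G H `^ p <= pcost G H id s.
Proof.
move=> mnN; case: gtt_distP => [mn|nm]; rewrite powRVK ?gtt_min_ge0 //.
  exact: gtt_min_le_pcost.
by rewrite pcostV gtt_min_le_pcost // addnC.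
Qed.

Lemma exists_pcost_eq_gtt_dist G H N : (gn G + gn H <= N)%N ->
  exists s : 'S_N, pcost G H id s = d G H `^ p.
Proof.
move=> mnN; case: gtt_distP => [mn|nm]; rewrite powRVK ?gtt_min_ge0 //.
  exact: exists_pcost_eq_gtt_min.
have nmN : (gn H + gn G <= N)%N by rewrite addnC.
have [s sE] := exists_pcost_eq_gtt_min (ltnW nm) nmN.
by exists (s^-1)%g; rewrite pcostV invgK.
Qed.

Lemma gtt_distC G H : d G H = d H G.
Proof.
suff le_dist G' H' : d G' H' `^ p <= d H' G' `^ p.
  by rewrite -(powRKV p_ge1 (gtt_dist_ge0 G H)) -(powRKV p_ge1 (gtt_dist_ge0 H G));
    congr (_ `^ _); apply/eqP; rewrite eq_le !le_dist.
have [s <-] := exists_pcost_eq_gtt_dist (leqnn (gn H' + gn G')).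
by rewrite pcostV; apply: gtt_dist_powR_le_pcost; rewrite addnC.
Qed.

(* Compose optimal alignments [s1] of [G1, G2] and [s2] of [G2, G3], after
   relabelling the padding of [G2] by [tau] so that no real vertex of [G1] is
   routed through a dummy of [G2] to a real vertex of [G3]. *)
Lemma gtt_dist_triangle G1 G2 G3 : d G1 G3 <= d G1 G2 + d G2 G3.
Proof.
pose N := (gn G1 + gn G2 + gn G3)%N.
have [s1 s1E] := @exists_pcost_eq_gtt_dist G1 G2 N (leq_addr _ _).
have [s2 s2E] : exists s : 'S_N, pcost G2 G3 id s = d G2 G3 `^ p.
  by apply: exists_pcost_eq_gtt_dist; rewrite /N -addnA leq_addl.
have [tau [tau_fix tau_avoid]] :=
  @perm_fix_prefix_relabel N (gn G1) (gn G2) (gn G3) s1 s2 (leqnn N).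
pose s3 k := s2 (tau (s1 k)).
have d13_le : d G1 G3 `^ p <= pcost G1 G3 id s3.
  rewrite -(@eq_pcost _ _ _ id _ (s1 * tau * s2)%g) // => [|k]; last by rewrite !permM.
  by apply: gtt_dist_powR_le_pcost; rewrite /N addnAC leq_addr.
have d23E : pcost G2 G3 s1 s3 = d G2 G3 `^ p.
  rewrite -s2E -(pcost_fix_padding _ _ _ tau_fix).
  rewrite -[RHS](pcost_comp_perm _ _ id s2 (s1 * tau)%g).
  by apply: eq_pcost => k; rewrite /= permM.
have no_detour (k : 'I_N) :
    ~ [/\ isSome (pad_vertex G1 k), pad_vertex G2 (s1 k) = None
         & isSome (pad_vertex G3 (s3 k))].
  rewrite !isSome_pad_vertex => -[kG1 /(congr1 isSome)]; rewrite isSome_pad_vertex /=.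
  by move/negbT; rewrite -leqNgt => /(tau_avoid _ kG1); rewrite /s3 leqNgt => /negbTE ->.
rewrite -(powRKV p_ge1 (gtt_dist_ge0 G1 G3)) -(powRKV p_ge1 (gtt_dist_ge0 G1 G2)).
rewrite -(powRKV p_ge1 (gtt_dist_ge0 G2 G3)) -s1E -d23E.
apply: le_trans _ (pcost_triangle (f := id) (g := s1) (h := s3) no_detour).
by apply: ler_wpowR; rewrite ?invr_ge0 ?powR_ge0.
Qed.

Lemma graph_eq_gtt_dist0 G H : graph_eq G H -> d G H = 0.
Proof.
case=> e [pi Gpi]; case: gtt_distP => [mn|nm].
  2: by exfalso; move: nm; rewrite e ltnn.
have -> : gtt_min mn = 0.
  apply/eqP; rewrite eq_le gtt_min_ge0 andbT.
  by rewrite -(gtt_cost_setT_eq0 mn Gpi) gtt_min_le.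
by rewrite powR0 // invr_eq0.
Qed.

Lemma gtt_dist0_graph_eq : (forall x y, dX x y = 0 -> x = y) ->
  (forall x y, dY x y = 0 -> x = y) ->
  forall G H, d G H = 0 -> graph_eq G H.
Proof.
move=> dX_sep dY_sep G H; case: gtt_distP => [mn|nm] /powR_eq0_eq0; last first.
  have [I [pi ->]] := gtt_min_attained (ltnW nm); case/gtt_cost_eq0 => card_I _ _.
  have I_le_n : (#|I| <= gn H)%N by rewrite -[leqRHS]card_ord max_card.
  by exfalso; lia.
have [I [pi ->]] := gtt_min_attained mn; case/gtt_cost_eq0 => card_I dX0 dY0.
have I_le_m : (#|I| <= gn G)%N by rewrite -[leqRHS]card_ord max_card.
have e : gn G = gn H by have := leq_trans I_le_m mn; lia.
have IT : I = setT by apply/eqP; rewrite eqEcard subsetT cardsT card_ord; lia.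
have wc i : cast_ord e i = widen_ord mn i by exact: val_inj.
exists e, pi => i i'; rewrite !wc.
by split; [apply/dX_sep/dX0 | apply/dY_sep/dY0]; rewrite ?IT ?in_setT.
Qed.

Lemma gtt_dist_pseudometric : pseudometric (d : graph X Y -> graph X Y -> R).
Proof.
split=> [G _ | G H _ _ | G1 G2 G3 _ _ _]; last exact: gtt_dist_triangle.
  by apply: graph_eq_gtt_dist0; exists erefl, 1%g => i i'; rewrite !perm1 !cast_ord_id.
exact: gtt_distC.
Qed.

Lemma gtt_dist_congr G G' H H' :
  graph_eq G G' -> graph_eq H H' -> d G H = d G' H'.
Proof.
move=> /graph_eq_gtt_dist0 GG' /graph_eq_gtt_dist0 HH'.
apply/eqP; rewrite eq_le; apply/andP; split.
  apply: le_trans (gtt_dist_triangle G G' H) _; rewrite GG' add0r.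
  by apply: le_trans (gtt_dist_triangle G' H' H) _; rewrite (gtt_distC H') HH' addr0.
apply: le_trans (gtt_dist_triangle G' G H') _; rewrite (gtt_distC G') GG' add0r.
by apply: le_trans (gtt_dist_triangle G H H') _; rewrite HH' addr0.
Qed.

End GttDistance.

Theorem mainTheorem2 (R : realType) (X Y : Type)
  (dX : X -> X -> R) (dY : Y -> Y -> R) (y0 : Y) (p C : R) :
  1 <= p -> 0 < C -> pseudometric dX -> pseudometric dY ->
  let d := gtt_dist dX dY y0 p C in
  let SG := simple_graph y0 in
  (forall G G' H H', SG G -> SG G' -> SG H -> SG H' ->
     graph_eq G G' -> graph_eq H H' -> d G H = d G' H') /\
  pseudometric_on SG d /\
  (metric dX -> metric dY ->
     forall G H, SG G -> SG H -> d G H = 0 -> graph_eq G H).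
Proof.
move=> p_ge1 C_gt0 dX_pm dY_pm d SG; split; [|split].
- by move=> G G' H H' _ _ _ _; apply: gtt_dist_congr.
- have [dGG dC dT] : pseudometric d by apply: gtt_dist_pseudometric.
  by split=> [G _ | G H _ _ | G1 G2 G3 _ _ _]; [apply: dGG | apply: dC | apply: dT].
- by move=> [_ dX_sep] [_ dY_sep] G H _ _; apply: gtt_dist0_graph_eq.
Qed.
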